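(* Let $G=(V_1\cup V_2,E)$ be a regular bipartite graph with stable sets satisfying $|V_1|=|V_2|=n$. If $G$ is not a mirror bipartite graph, then $n\ge 6$.
   Context: A bipartite graph $G=(V_1\cup V_2,E)$ with stable sets $V_1,V_2$ is mirror if there is a bijection $\varphi:V_1\to V_2$ such that for all $u,v\in V_1$, $u\varphi(v)\in E$ if and only if $\varphi(u)v\in E$. *)

From mathcomp Require Import all_boot.
Set Implicit Arguments. Unset Strict Implicit. Unset Printing Implicit Defensive.

(* A bipartite graph with stable sets V1, V2 (finite types) is given by its
   edge relation E : V1 -> V2 -> bool ; u v are adjacent iff E u v. *)

Definition bip_regular (V1 V2 : finType) (E : V1 -> V2 -> bool) : Prop :=
  exists k : nat,
    (forall u : V1, #|[set v : V2 | E u v]| = k) /\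
    (forall v : V2, #|[set u : V1 | E u v]| = k).

(* Mirror: a bijection phi : V1 -> V2 with u phi(v) in E <-> phi(u) v in E,
   i.e. E u (phi v) = E v (phi u) (the edge phi(u)v joins v in V1 to phi(u) in V2). *)
Definition mirror (V1 V2 : finType) (E : V1 -> V2 -> bool) : Prop :=
  exists phi : V1 -> V2, bijective phi /\
    (forall u v : V1, E u (phi v) = E v (phi u)).

(* Relabel both sides by 'I_n; then the adjacency relation is an n x n 0/1
   matrix whose row and column sums all equal k, and a mirror map is a
   permutation p of 'I_n with M u (p v) = M v (p u).  For each n < 6 and each
   k <= n we enumerate all matrices with row sums k and, for those whose column
   sums are also k, search the permutations of 'I_n for such a p; the search
   succeeds in every case. *)
From mathcomp Require Import all_boot.

Set Implicit Arguments. Unset Strict Implicit. Unset Printing Implicit Defensive.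

Lemma card_set_bij (T U : finType) (f : T -> U) (P : pred U) :
  bijective f -> #|[set x | P (f x)]| = #|[set y | P y]|.
Proof.
move=> f_bij; rewrite -(on_card_preimset (f := f)); last exact: onW_bij.
by apply: eq_card => x; rewrite !inE.
Qed.

Section Relabel.

Variables (V1 V2 W1 W2 : finType) (E : V1 -> V2 -> bool).
Variables (a : W1 -> V1) (b : W2 -> V2).
Hypotheses (a_bij : bijective a) (b_bij : bijective b).

Let E' (i : W1) (j : W2) := E (a i) (b j).

Lemma bip_regular_relabel : bip_regular E -> bip_regular E'.
Proof.
move=> [k [row_k col_k]]; exists k; split=> [i | j].
- by rewrite (card_set_bij (E (a i)) b_bij) row_k.
- by rewrite (card_set_bij (fun u => E u (b j)) a_bij) col_k.
Qed.

Lemma mirror_relabel : mirror E' -> mirror E.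
Proof.
move=> [phi [phi_bij phiE]]; have [a' aK a'K] := a_bij.
exists (b \o phi \o a'); split.
  by apply: bij_comp; [apply: bij_comp | exists a].
by move=> u v /=; have := phiE (a' u) (a' v); rewrite /E' !a'K.
Qed.

End Relabel.

Lemma ord_bij (T : finType) (n : nat) (cardT : #|T| = n) :
  {f : 'I_n -> T | bijective f}.
Proof.
exists (fun i => enum_val (cast_ord (esym cardT) i)).
exists (fun x => cast_ord cardT (enum_rank x)) => [i | x].
  by rewrite enum_valK cast_ordKV.
by rewrite cast_ordK enum_rankK.
Qed.

Lemma count_enum (T : finType) (P : pred T) :
  count P (enum T) = #|[set x | P x]|.
Proof. by rewrite cardsE cardE enumT /enum_mem size_filter. Qed.

Fixpoint tuples (T : Type) (L : seq T) (n : nat) : seq (seq T) :=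
  if n is m.+1 then [seq x :: t | x <- L, t <- tuples L m] else [:: [::]].

Lemma mem_tuples (T : eqType) (L : seq T) n s :
  (s \in tuples L n) = (size s == n) && all (mem L) s.
Proof.
elim: n s => [|n IH] [|x s] //=; rewrite ?inE //.
- by apply/allpairsP => -[[y t] [_ _]].
- apply/allpairsP/idP => [[[y t] /= [yL tn [-> ->]]]|].
    by move: tn; rewrite IH eqSS yL => /andP[-> ->].
  by rewrite eqSS => /andP[sn /andP[xL sL]]; exists (x, s); rewrite /= IH sn.
Qed.

(* [all_tuples L n P] tests [P] on every length-[n] sequence over [L] without
   building the (exponentially long) list [tuples L n]. *)
Fixpoint all_tuples (T : Type) (L : seq T) (n : nat) (P : pred (seq T)) : bool :=
  if n is m.+1 then all (fun x => all_tuples L m (fun t => P (x :: t))) L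
  else P [::].

Lemma all_tuplesP (T : eqType) (L : seq T) n P s :
  all_tuples L n P -> size s = n -> all (mem L) s -> P s.
Proof.
elim: n P s => [|n IH] P [|x s] //= allP' [sn] /andP[xL sL].
exact: IH (allP allP' x xL) sn sL.
Qed.

Definition entry (M : seq (seq bool)) (i j : nat) := nth false (nth [::] M i) j.

Definition adj_matrix n (E : 'I_n -> 'I_n -> bool) : seq (seq bool) :=
  [seq [seq E i j | j <- enum 'I_n] | i <- enum 'I_n].

Lemma entry_adj_matrix n (E : 'I_n -> 'I_n -> bool) (i j : 'I_n) :
  entry (adj_matrix E) i j = E i j.
Proof.
by rewrite /entry (nth_map i) ?size_enum_ord // nth_ord_enum
           (nth_map j) ?size_enum_ord // nth_ord_enum.
Qed.

Definition col_sums_eq n (M : seq (seq bool)) k :=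
  all (fun j => count (fun i => entry M i j) (iota 0 n) == k) (iota 0 n).

Definition mirror_perm n (M : seq (seq bool)) (p : seq nat) :=
  all (fun u => all (fun v => entry M u (nth 0 p v) == entry M v (nth 0 p u))
    (iota 0 n)) (iota 0 n).

Definition regular_mirror_check n : bool :=
  all (fun k =>
    all_tuples [seq r <- tuples [:: true; false] n | count id r == k] n
      (fun M => col_sums_eq n M k ==> has (mirror_perm n M) (permutations (iota 0 n))))
    (iota 0 n.+1).

Lemma mirror_perm_mirror n (E : 'I_n -> 'I_n -> bool) p :
  perm_eq p (iota 0 n) -> mirror_perm n (adj_matrix E) p -> mirror E.
Proof.
move=> p_perm /allP p_mirror.
have p_uniq : uniq p by rewrite (perm_uniq p_perm) iota_uniq.
have p_size : size p = n by rewrite (perm_size p_perm) size_iota.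
have p_lt (i : 'I_n) : nth 0 p i < n.
  have : nth 0 p i \in iota 0 n by rewrite -(perm_mem p_perm) mem_nth ?p_size.
  by rewrite mem_iota.
exists (fun i => Ordinal (p_lt i)); split.
  apply: injF_bij => i j [] /eqP; rewrite nth_uniq ?p_size //.
  by move/eqP/val_inj.
have mem_iota_ord (i : 'I_n) : val i \in iota 0 n by rewrite mem_iota ltn_ord.
move=> u v; have /allP/(_ v (mem_iota_ord v))/eqP := p_mirror u (mem_iota_ord u).
by rewrite -!(entry_adj_matrix E).
Qed.

Lemma regular_mirror_checkP n (E : 'I_n -> 'I_n -> bool) :
  regular_mirror_check n -> bip_regular E -> mirror E.
Proof.
(* Without vertices the degree k is unconstrained, so k <= n fails there. *)
case: n E => [|n] E /allP check_n [k [row_k col_k]].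
  by exists id; split; [exists id | case].
have k_le_n : k < n.+2 by rewrite ltnS -(card_ord n.+1) -(row_k ord0) max_card.
set M := adj_matrix E.
have M_rows : all (mem [seq r <- tuples [:: true; false] n.+1 | count id r == k]) M.
  apply/allP => _ /mapP[i _ ->].
  rewrite inE mem_filter mem_tuples size_map size_enum_ord count_map count_enum.
  by rewrite row_k !eqxx; apply/allP => -[] _; rewrite !inE.
have M_cols : col_sums_eq n.+1 M k.
  apply/allP => j; rewrite mem_iota => /andP[_ j_lt].
  rewrite -val_enum_ord count_map (eq_count (a2 := E^~ (Ordinal j_lt))).
    by rewrite count_enum col_k.
  by move=> i; rewrite /= -[j]/(val (Ordinal j_lt)) entry_adj_matrix.
have := all_tuplesP (check_n k _) _ M_rows.
rewrite mem_iota k_le_n size_map size_enum_ord M_cols => /(_ isT erefl).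
by case/hasP => p; rewrite mem_permutations; apply: mirror_perm_mirror.
Qed.

Lemma regular_mirror_check_lt6 n : n < 6 -> regular_mirror_check n.
Proof. by case: n => [|[|[|[|[|[|]]]]]] // _; vm_compute. Qed.

Theorem proposition1 (V1 V2 : finType) (E : V1 -> V2 -> bool) (n : nat) :
  #|V1| = n -> #|V2| = n -> bip_regular E -> ~ mirror E -> 6 <= n.
Proof.
move=> card_V1 card_V2 E_reg E_not_mirror; rewrite leqNgt; apply/negP => n_lt6.
have [a a_bij] := ord_bij card_V1; have [b b_bij] := ord_bij card_V2.
apply/E_not_mirror/(mirror_relabel a_bij b_bij).
apply: (regular_mirror_checkP (regular_mirror_check_lt6 n_lt6)).
exact: bip_regular_relabel.
Qed.
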